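(* For every integer $N\ge16$ there is $C<\infty$ such that for every interval $I\subset[0,1]$ with $\widehat{\dot\sigma}(I)>0$, $$\widehat{\dot\sigma}(I)\,\mathsf E(I,\widehat{\dot\sigma})^2\,\mathrm P(I,\widehat\omega)^2\le C\,\widehat\omega(I).$$
   Context: $\mathrm P(I,\mu)=\int_{\mathbb R}\frac{|I|}{(|I|+\operatorname{dist}(x,I))^2}\,d\mu(x)$; for $\mu(I)>0$, $\mathsf E(I,\mu)^2=\frac12\,\frac{1}{\mu(I)^2}\int_I\int_I\frac{(x-x')^2}{|I|^2}\,d\mu(x)\,d\mu(x')$. Cantor intervals: fix an integer $N\ge16$. Set $I^0_1=[0,1]$. Each interval $I=[a,a+N^{-k}]$ of generation $k$ has two children of generation $k+1$: the left child $I_-=[a,a+N^{-k-1}]$ and the right child $I_+=[a+N^{-k}-N^{-k-1},a+N^{-k}]$. The $2^k$ intervals of generation $k$ are denoted $I^k_j$, $1\le j\le 2^k$, numbered left to right; $\mathcal D$ is the collection of all of them. $\dot z^k_j$ is the center of $I^k_j$. The Cantor set is $\mathsf E^{(N)}=\bigcap_{k}\bigcup_{j}I^k_j$. Redistributed Cantor measure: with $\eta=1/N$, $\widehat\omega$ is the unique Borel probability measure supported on $\mathsf E^{(N)}$ such that $\widehat\omega(I^1_1)=\widehat\omega(I^1_2)=\frac12$ and for every $I\in\mathcal D$ of generation $\ge1$: if $I$ is the left child of its parent then $\widehat\omega(I_-)=\frac{1+\eta}2\widehat\omega(I)$, $\widehat\omega(I_+)=\frac{1-\eta}2\widehat\omega(I)$;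 if $I$ is the right child of its parent then $\widehat\omega(I_-)=\frac{1-\eta}2\widehat\omega(I)$, $\widehat\omega(I_+)=\frac{1+\eta}2\widehat\omega(I)$. Weights: $\widehat s^k_j=N^{-2k}/\widehat\omega(I^k_j)$; $\widehat{\dot\sigma}=\sum_{k\ge0}\sum_{j=1}^{2^k}\widehat s^k_j\,\delta_{\dot z^k_j}$. *)

From Stdlib Require Import Reals Lra Lia.
Open Scope R_scope.

Fixpoint sumR (n : nat) (f : nat -> R) : R :=
  match n with
  | O => 0
  | S m => sumR m f + f m
  end.

(* Cantor intervals, 0-indexed: I^k_j for j < 2^k, left endpoint cl N k j,
   length N^{-k}.  Children of (k,j) are (k+1,2j) (left) and (k+1,2j+1) (right). *)
Fixpoint cl (N : nat) (k j : nat) : R :=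
  match k with
  | O => 0
  | S k' => cl N k' (Nat.div2 j)
            + (if Nat.odd j then / INR N ^ k' - / INR N ^ (S k') else 0)
  end.

Definition clen (N k : nat) : R := / INR N ^ k.

Definition ccenter (N k j : nat) : R := cl N k j + clen N k / 2.

(* masses \widehat\omega(I^k_j) of the redistributed Cantor measure, eta = 1/N *)
Fixpoint omega_cyl (N : nat) (k j : nat) : R :=
  match k with
  | O => 1
  | S O => / 2
  | S ((S _) as k') =>
      omega_cyl N k' (Nat.div2 j) *
      (if Bool.eqb (Nat.odd j) (Nat.odd (Nat.div2 j))
       then (1 + / INR N) / 2 else (1 - / INR N) / 2)
  end.

Definition s_weight (N k j : nat) : R := / INR N ^ (2 * k) / omega_cyl N k j.

(* interval I with endpoints a < b; la / lb say whether a / b belong to I *)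
Definition inIb (a b : R) (la lb : bool) (x : R) : bool :=
  (if la then (if Rle_dec a x then true else false)
         else (if Rlt_dec a x then true else false)) &&
  (if lb then (if Rle_dec x b then true else false)
         else (if Rlt_dec x b then true else false)).

Definition indI (a b : R) (la lb : bool) (x : R) : R :=
  if inIb a b la lb x then 1 else 0.

Definition distI (a b x : R) : R := Rmax (Rmax (a - x) (x - b)) 0.

(* partial sums (generations < K) of \widehat{\dot\sigma}(I) *)
Definition sigma_partial (N : nat) (a b : R) (la lb : bool) (K : nat) : R :=
  sumR K (fun k => sumR (2 ^ k) (fun j =>
    s_weight N k j * indI a b la lb (ccenter N k j))).

(* partial sums of  \int_I\int_I (x-x')^2 d\sigma(x) d\sigma(x') *)
Definition dbl_partial (N : nat) (a b : R) (la lb : bool) (K : nat) : R :=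
  sumR K (fun k => sumR (2 ^ k) (fun j =>
  sumR K (fun k' => sumR (2 ^ k') (fun j' =>
    s_weight N k j * indI a b la lb (ccenter N k j) *
    (s_weight N k' j' * indI a b la lb (ccenter N k' j')) *
    (ccenter N k j - ccenter N k' j') ^ 2)))).

(* generation-k discrete approximation of \widehat\omega :
   \omega_k = \sum_j \widehat\omega(I^k_j) \delta_{\dot z^k_j}  (converges weakly to \widehat\omega) *)
Definition omega_approx (N : nat) (a b : R) (la lb : bool) (k : nat) : R :=
  sumR (2 ^ k) (fun j => omega_cyl N k j * indI a b la lb (ccenter N k j)).

Definition poisson_approx (N : nat) (a b : R) (k : nat) : R :=
  sumR (2 ^ k) (fun j => omega_cyl N k j *
     ((b - a) / ((b - a) + distI a b (ccenter N k j)) ^ 2)).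

(* Let I^k_{j0} be the Cantor interval of least generation whose centre z lies in
   I, and u = N^{-k} / ω(I^k_{j0}).  Every other centre in I is the centre of a
   descendant of I^k_{j0}.  A centre of generation g > k carries σ-mass
   (N^{-g} / ω(I^g_j))² ω(I^g_j) <= (32/(15N))^{2(g-k)} u² ω(I^g_j), because a child
   carries at least 15/32 of its parent's mass; and the child of I^g_j facing z lies
   inside I.  Summing the geometric series, ∫_I (x - z)² dσ <= |I|² u² ω(I), hence
   ∬_{I×I} (x - x')² dσ dσ <= 4 σ(I) |I|² u² ω(I).  On the other side, a point of
   the Cantor set whose ancestry leaves that of I^k_{j0} at generation l <= k is at
   distance >= (7/16) N^{-l} from z, so
   P(I, ω) <= Σ_{l<=k} 4 N^l (32/15)^{k-l} ω(I^k_{j0}) <= 8 N^k ω(I^k_{j0}), i.e.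
   u P <= 8.  Together σ(I) E(I,σ)² P(I,ω)² <= 2 (u P)² ω(I) <= 128 ω(I). *)

From Stdlib Require Import Reals Lra Lia Wf_nat Classical.
Open Scope R_scope.

Lemma sumR_ext n f g : (forall i, (i < n)%nat -> f i = g i) -> sumR n f = sumR n g.
Proof.
  induction n as [|n IH]; intros H; simpl; [reflexivity|].
  rewrite IH by (intros; apply H; lia). rewrite H by lia. reflexivity.
Qed.

Lemma sumR_le n f g : (forall i, (i < n)%nat -> f i <= g i) -> sumR n f <= sumR n g.
Proof.
  induction n as [|n IH]; intros H; simpl; [lra|].
  pose proof (IH (fun i Hi => H i ltac:(lia))). pose proof (H n ltac:(lia)). lra.
Qed.

Lemma sumR_const0 n : sumR n (fun _ => 0) = 0.
Proof. induction n as [|n IH]; simpl; [|rewrite IH]; ring. Qed.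

Lemma sumR_nonneg n f : (forall i, (i < n)%nat -> 0 <= f i) -> 0 <= sumR n f.
Proof. intros H. rewrite <- (sumR_const0 n). now apply sumR_le. Qed.

Lemma sumR_eq0 n f : (forall i, (i < n)%nat -> f i = 0) -> sumR n f = 0.
Proof. intros H. rewrite <- (sumR_const0 n). now apply sumR_ext. Qed.

Lemma sumR_add n f g : sumR n (fun i => f i + g i) = sumR n f + sumR n g.
Proof. induction n as [|n IH]; simpl; [|rewrite IH]; ring. Qed.

Lemma sumR_scal n c f : sumR n (fun i => c * f i) = c * sumR n f.
Proof. induction n as [|n IH]; simpl; [|rewrite IH]; ring. Qed.

Lemma sumR_swap n m (f : nat -> nat -> R) :
  sumR n (fun i => sumR m (f i)) = sumR m (fun l => sumR n (fun i => f i l)).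
Proof.
  induction n as [|n IH]; simpl.
  - symmetry. now apply sumR_eq0.
  - rewrite IH, <- sumR_add. reflexivity.
Qed.

Lemma sumR_double n f : sumR (2 * n) f = sumR n (fun i => f (2 * i)%nat + f (2 * i + 1)%nat).
Proof.
  induction n as [|n IH]; [reflexivity|].
  replace (2 * S n)%nat with (S (S (2 * n))) by lia.
  cbn [sumR]. rewrite IH. replace (S (2 * n)) with (2 * n + 1)%nat by lia. ring.
Qed.

Lemma sumR_term_le n f i : (forall i, (i < n)%nat -> 0 <= f i) -> (i < n)%nat -> f i <= sumR n f.
Proof.
  induction n as [|n IH]; intros H Hi; simpl; [lia|].
  pose proof (sumR_nonneg n f (fun l Hl => H l ltac:(lia))).
  destruct (Nat.eq_dec i n) as [->|Hne]; [lra|].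
  pose proof (IH (fun l Hl => H l ltac:(lia)) ltac:(lia)). pose proof (H n ltac:(lia)). lra.
Qed.

Lemma sumR_indicator n f p :
  (p < n)%nat -> sumR n (fun i => (if Nat.eq_dec i p then 1 else 0) * f i) = f p.
Proof.
  induction n as [|n IH]; intros Hp; simpl; [lia|].
  destruct (Nat.eq_dec n p) as [->|Hne].
  - rewrite sumR_eq0; [ring|]. intros i Hi. destruct (Nat.eq_dec i p); [lia|ring].
  - rewrite IH by lia. ring.
Qed.

Lemma sumR_geom_tail_le k r K : 0 <= r <= 1 / 2 ->
  sumR K (fun g => if Nat.ltb k g then r ^ (g - k) else 0) <= 2 * r.
Proof.
  intros Hr.
  enough (H : sumR K (fun g => if Nat.ltb k g then r ^ (g - k) else 0) + 2 * r ^ S (K - S k) <= 2 * r)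
    by (pose proof (pow_le r (S (K - S k)) ltac:(lra)); lra).
  induction K as [|K IH]; simpl sumR; [simpl; lra|].
  destruct (Nat.ltb_spec k K) as [HkK|HKk].
  - replace (S K - S k)%nat with (S (K - S k)) by lia.
    replace (K - k)%nat with (S (K - S k)) by lia.
    pose proof (pow_le r (S (K - S k)) ltac:(lra)).
    change (r ^ S (S (K - S k))) with (r * r ^ S (K - S k)). nra.
  - replace (S K - S k)%nat with (K - S k)%nat by lia. lra.
Qed.

Lemma sumR_pow_mul_pow_le x y k : 0 <= y -> 2 * y <= x ->
  sumR (S k) (fun l => x ^ l * y ^ (k - l)) <= 2 * x ^ k.
Proof.
  intros Hy Hxy. induction k as [|k IH]; [simpl; lra|].
  change (sumR (S (S k)) (fun l => x ^ l * y ^ (S k - l)))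
    with (sumR (S k) (fun l => x ^ l * y ^ (S k - l)) + x ^ S k * y ^ (S k - S k)).
  rewrite (sumR_ext (S k) _ (fun l => y * (x ^ l * y ^ (k - l)))).
  - rewrite sumR_scal, Nat.sub_diag. simpl pow.
    pose proof (pow_le x k ltac:(lra)). nra.
  - intros l Hl. replace (S k - l)%nat with (S (k - l)) by lia. simpl. ring.
Qed.

Definition sumD (K : nat) (f : nat -> nat -> R) : R := sumR K (fun g => sumR (2 ^ g) (f g)).

Lemma sumD_le K f h : (forall g j, f g j <= h g j) -> sumD K f <= sumD K h.
Proof. intros H. apply sumR_le. intros g _. apply sumR_le. auto. Qed.

Lemma sumD_nonneg K f : (forall g j, 0 <= f g j) -> 0 <= sumD K f.
Proof. intros H. apply sumR_nonneg. intros g _. apply sumR_nonneg. auto. Qed.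

Lemma sumD_add K f h : sumD K (fun g j => f g j + h g j) = sumD K f + sumD K h.
Proof. unfold sumD. rewrite <- sumR_add. apply sumR_ext. intros. apply sumR_add. Qed.

Lemma sumD_scal K c f : sumD K (fun g j => c * f g j) = c * sumD K f.
Proof. unfold sumD. rewrite <- sumR_scal. apply sumR_ext. intros. apply sumR_scal. Qed.

Lemma sumD_scal_r K c f : sumD K (fun g j => f g j * c) = sumD K f * c.
Proof.
  rewrite Rmult_comm, <- sumD_scal.
  apply sumR_ext. intros. apply sumR_ext. intros. ring.
Qed.

Lemma sumD_sq_diff_le K (w x : nat -> nat -> R) (z : R) : (forall g j, 0 <= w g j) ->
  sumD K (fun g j => sumD K (fun g' j' => w g j * w g' j' * (x g j - x g' j') ^ 2))
  <= 4 * sumD K w * sumD K (fun g j => w g j * (x g j - z) ^ 2).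
Proof.
  intros Hw. set (W := sumD K w). set (V := sumD K (fun g j => w g j * (x g j - z) ^ 2)).
  apply Rle_trans with (sumD K (fun g j => 2 * (w g j * (x g j - z) ^ 2) * W + 2 * w g j * V)).
  - apply sumD_le. intros g j. unfold W, V. rewrite <- !sumD_scal, <- sumD_add.
    apply sumD_le. intros g' j'.
    pose proof (pow2_ge_0 (x g j + x g' j' - 2 * z)).
    pose proof (Hw g j). pose proof (Hw g' j').
    assert (Hww : 0 <= w g j * w g' j') by nra.
    assert ((x g j - x g' j') ^ 2 <= 2 * (x g j - z) ^ 2 + 2 * (x g' j' - z) ^ 2) by nra.
    nra.
  - rewrite sumD_add, !sumD_scal_r, !sumD_scal. fold V W. lra.
Qed.

Lemma Un_cv_le_eventually u l M n0 : Un_cv u l -> (forall n, (n0 <= n)%nat -> u n <= M) -> l <= M.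
Proof.
  intros Hu H. apply Rnot_lt_le. intros HMl.
  destruct (Hu (l - M)) as [n1 Hn1]; [lra|].
  specialize (Hn1 (max n0 n1) ltac:(lia)). specialize (H (max n0 n1) ltac:(lia)).
  unfold R_dist in Hn1. apply Rabs_def2 in Hn1. lra.
Qed.

Lemma Un_cv_ge_eventually u l M n0 : Un_cv u l -> (forall n, (n0 <= n)%nat -> M <= u n) -> M <= l.
Proof.
  intros Hu H. enough (- l <= - M) by lra.
  apply (Un_cv_le_eventually (opp_seq u) _ _ n0 (CV_opp u l Hu)).
  intros n Hn. unfold opp_seq. specialize (H n Hn). lra.
Qed.

Lemma div_pow2_add j m n : (j / 2 ^ (m + n) = j / 2 ^ m / 2 ^ n)%nat.
Proof. rewrite Nat.Div0.div_div, Nat.pow_add_r. reflexivity. Qed.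

Lemma div_pow2_S j m : (j / 2 ^ S m = j / 2 / 2 ^ m)%nat.
Proof. exact (div_pow2_add j 1 m). Qed.

Lemma div_pow2_lt j m l : (j < 2 ^ (m + l))%nat -> (j / 2 ^ m < 2 ^ l)%nat.
Proof. intros H. apply Nat.Div0.div_lt_upper_bound. now rewrite <- Nat.pow_add_r. Qed.

Lemma double_div2 i : (2 * i / 2 = i)%nat.
Proof. symmetry. apply (Nat.div_unique _ _ _ 0); lia. Qed.

Lemma double_S_div2 i : ((2 * i + 1) / 2 = i)%nat.
Proof. symmetry. apply (Nat.div_unique _ _ _ 1); lia. Qed.

Lemma odd_sibling p p' : (p / 2 = p' / 2)%nat -> p <> p' -> Nat.odd p' = negb (Nat.odd p).
Proof.
  intros H1 H2. pose proof (Nat.div2_odd p). pose proof (Nat.div2_odd p').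
  rewrite !Nat.div2_div in *. destruct (Nat.odd p), (Nat.odd p'); simpl in *; auto; lia.
Qed.

Lemma inIb_bounds a b la lb x : inIb a b la lb x = true -> a <= x <= b.
Proof.
  unfold inIb. destruct la, lb;
  repeat match goal with |- context [Rle_dec ?u ?v] => destruct (Rle_dec u v)
                       | |- context [Rlt_dec ?u ?v] => destruct (Rlt_dec u v) end;
  simpl; intros; try discriminate; lra.
Qed.

Lemma inIb_convex a b la lb x y z : inIb a b la lb x = true -> inIb a b la lb y = true ->
  x <= z <= y -> inIb a b la lb z = true.
Proof.
  unfold inIb. destruct la, lb;
  repeat match goal with |- context [Rle_dec ?u ?v] => destruct (Rle_dec u v)
                       | |- context [Rlt_dec ?u ?v] => destruct (Rlt_dec u v) end;
  simpl; intros; try discriminate; try reflexivity; lra.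
Qed.

Lemma indI_nonneg a b la lb x : 0 <= indI a b la lb x.
Proof. unfold indI. destruct inIb; lra. Qed.

Lemma poisson_kernel_le a b x z d : a < b -> a <= z <= b -> 0 < d -> d <= Rabs (x - z) ->
  (b - a) / ((b - a) + distI a b x) ^ 2 <= / d.
Proof.
  intros Hab Hz Hd Hdx.
  set (S := b - a + distI a b x).
  assert (HS : b - a <= S /\ d <= S).
  { unfold S, distI. pose proof (Rmax_r (Rmax (a - x) (x - b)) 0).
    pose proof (Rmax_l (Rmax (a - x) (x - b)) 0).
    pose proof (Rmax_l (a - x) (x - b)). pose proof (Rmax_r (a - x) (x - b)).
    split; [lra|]. destruct (Rle_dec z x); [rewrite Rabs_right in Hdx|rewrite Rabs_left in Hdx]; lra. }
  apply Rle_trans with (/ S); [|apply Rinv_le_contravar; lra].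
  replace (/ S) with (S * / S ^ 2) by (field; lra).
  apply Rmult_le_compat_r; [|lra]. left. apply Rinv_0_lt_compat. nra.
Qed.

Section CantorIntervals.

Variable N : nat.
Hypothesis HN : (16 <= N)%nat.

Lemma INR_N_ge16 : 16 <= INR N.
Proof. apply le_INR in HN. simpl in HN. lra. Qed.

Lemma clen_pos k : 0 < clen N k.
Proof. pose proof INR_N_ge16. apply Rinv_0_lt_compat, pow_lt. lra. Qed.

Lemma clen_add k d : clen N (k + d) = clen N k * / INR N ^ d.
Proof. unfold clen. rewrite pow_add, Rinv_mult. reflexivity. Qed.

Lemma clen_S_le k : clen N (S k) <= clen N k / 16.
Proof.
  pose proof INR_N_ge16. pose proof (clen_pos k).
  rewrite <- Nat.add_1_r, clen_add. simpl pow. rewrite Rmult_1_r.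
  apply Rmult_le_compat_l; [lra|]. apply Rinv_le_contravar; lra.
Qed.

Lemma pow_mul_clen k : INR N ^ k * clen N k = 1.
Proof. pose proof INR_N_ge16. apply Rinv_r, pow_nonzero. lra. Qed.

Lemma cl_S k p : cl N (S k) p = cl N k (p / 2) + (if Nat.odd p then clen N k - clen N (S k) else 0).
Proof. simpl. rewrite Nat.div2_div. reflexivity. Qed.

Definition in_cyl k j x := cl N k j <= x <= cl N k j + clen N k.

Lemma ccenter_in_cyl k j : in_cyl k j (ccenter N k j).
Proof. pose proof (clen_pos k). unfold in_cyl, ccenter. lra. Qed.

(* A child of I^k_j has length N^{-k-1} <= N^{-k}/16, so it stays at distance at least
   (1/2 - 1/16) N^{-k} from the centre of I^k_j. *)
Lemma in_cyl_child_side k p x : in_cyl (S k) p x ->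
  if Nat.odd p then ccenter N k (p / 2) + 7 / 16 * clen N k <= x
  else x <= ccenter N k (p / 2) - 7 / 16 * clen N k.
Proof.
  intros [H1 H2]. rewrite cl_S in H1, H2.
  pose proof (clen_S_le k). pose proof (clen_pos (S k)).
  unfold ccenter. destruct (Nat.odd p); lra.
Qed.

Lemma in_cyl_parent k p x : in_cyl (S k) p x -> in_cyl k (p / 2) x.
Proof.
  intros [H1 H2]. rewrite cl_S in H1, H2.
  pose proof (clen_S_le k). pose proof (clen_pos (S k)).
  unfold in_cyl. destruct (Nat.odd p); lra.
Qed.

Lemma in_cyl_ancestor l m j x : in_cyl (l + m) j x -> in_cyl l (j / 2 ^ m) x.
Proof.
  revert j. induction m as [|m IH]; intros j Hx.
  - rewrite Nat.add_0_r in Hx. now rewrite Nat.pow_0_r, Nat.div_1_r.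
  - rewrite div_pow2_S. apply IH, in_cyl_parent. now rewrite <- Nat.add_succ_r.
Qed.

Lemma in_cyl_separation k i j x y : (i < 2 ^ k)%nat -> (j < 2 ^ k)%nat -> i <> j ->
  in_cyl k i x -> in_cyl k j y ->
  exists l, (l < k)%nat /\ (i / 2 ^ (k - l) = j / 2 ^ (k - l))%nat /\
    (x <= ccenter N l (j / 2 ^ (k - l)) - 7 / 16 * clen N l /\
       ccenter N l (j / 2 ^ (k - l)) + 7 / 16 * clen N l <= y \/
     y <= ccenter N l (j / 2 ^ (k - l)) - 7 / 16 * clen N l /\
       ccenter N l (j / 2 ^ (k - l)) + 7 / 16 * clen N l <= x).
Proof.
  revert i j. induction k as [|k IH]; intros i j Hi Hj Hij Hx Hy; [simpl in Hi, Hj; lia|].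
  destruct (Nat.eq_dec (i / 2) (j / 2)) as [Hsib|Hne].
  - exists k. rewrite Nat.sub_succ_l, Nat.sub_diag by lia. simpl (2 ^ 1)%nat.
    split; [lia|]. split; [exact Hsib|].
    apply in_cyl_child_side in Hx. apply in_cyl_child_side in Hy.
    rewrite (odd_sibling i j Hsib Hij), <- Hsib in Hy. rewrite <- Hsib.
    destruct (Nat.odd i); simpl in *; lra.
  - assert (Hlt : forall p, (p < 2 ^ S k)%nat -> (p / 2 < 2 ^ k)%nat)
      by (intros p Hp; apply (div_pow2_lt p 1 k), Hp).
    destruct (IH (i / 2)%nat (j / 2)%nat (Hlt i Hi) (Hlt j Hj) Hne (in_cyl_parent _ _ _ Hx)
                 (in_cyl_parent _ _ _ Hy)) as [l [Hl Hsep]].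
    exists l. replace (S k - l)%nat with (S (k - l)) by lia. rewrite !div_pow2_S.
    split; [lia|exact Hsep].
Qed.

Lemma omega_cyl_SS k j : omega_cyl N (S (S k)) j = omega_cyl N (S k) (Nat.div2 j) *
  (if Bool.eqb (Nat.odd j) (Nat.odd (Nat.div2 j)) then (1 + / INR N) / 2 else (1 - / INR N) / 2).
Proof. reflexivity. Qed.

Lemma omega_cyl_pos k j : 0 < omega_cyl N k j.
Proof.
  pose proof INR_N_ge16.
  assert (0 < / INR N < 1).
  { split; [apply Rinv_0_lt_compat; lra|]. rewrite <- Rinv_1. apply Rinv_lt_contravar; lra. }
  revert j. induction k as [|[|k] IH]; intros j; [simpl; lra|simpl; lra|].
  rewrite omega_cyl_SS. apply Rmult_lt_0_compat; [apply IH|]. destruct Bool.eqb; lra.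
Qed.

Lemma omega_cyl_children k i :
  omega_cyl N (S k) (2 * i) + omega_cyl N (S k) (2 * i + 1) = omega_cyl N k i.
Proof.
  destruct k as [|k]; [simpl; lra|].
  rewrite !omega_cyl_SS, Nat.add_1_r.
  rewrite Nat.odd_succ, Nat.even_even, Nat.odd_even, Nat.div2_succ_double, Nat.div2_double.
  set (e := / INR N). destruct (Nat.odd i); cbn [Bool.eqb]; field.
Qed.

Lemma omega_cyl_parent_le k j : omega_cyl N k (j / 2) <= 32 / 15 * omega_cyl N (S k) j.
Proof.
  pose proof INR_N_ge16.
  assert (0 < / INR N <= / 16) by (split; [apply Rinv_0_lt_compat|apply Rinv_le_contravar]; lra).
  destruct k as [|k]; [simpl; lra|].
  pose proof (omega_cyl_pos (S k) (j / 2)).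
  rewrite omega_cyl_SS, Nat.div2_div. destruct Bool.eqb; nra.
Qed.

Lemma omega_cyl_ancestor_le l d j :
  omega_cyl N l (j / 2 ^ d) <= (32 / 15) ^ d * omega_cyl N (l + d) j.
Proof.
  revert j. induction d as [|d IH]; intros j.
  - rewrite Nat.add_0_r, Nat.pow_0_r, Nat.div_1_r. simpl. lra.
  - rewrite Nat.add_succ_r, div_pow2_S. simpl pow.
    pose proof (IH (j / 2)%nat). pose proof (omega_cyl_parent_le (l + d) j).
    pose proof (pow_lt (32 / 15) d ltac:(lra)). nra.
Qed.

Lemma clen_div_omega_le l d j :
  clen N (l + d) / omega_cyl N (l + d) j
  <= (32 / 15 / INR N) ^ d * (clen N l / omega_cyl N l (j / 2 ^ d)).
Proof.
  pose proof INR_N_ge16. pose proof (clen_pos l).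
  pose proof (omega_cyl_pos l (j / 2 ^ d)). pose proof (omega_cyl_pos (l + d) j).
  pose proof (omega_cyl_ancestor_le l d j).
  change (32 / 15 / INR N) with (32 / 15 * / INR N).
  rewrite clen_add, Rpow_mult_distr, pow_inv.
  set (A := (32 / 15) ^ d) in *. set (iN := / INR N ^ d).
  assert (0 < A) by (apply pow_lt; lra).
  assert (0 < iN) by (apply Rinv_0_lt_compat, pow_lt; lra).
  replace (A * iN * (clen N l / omega_cyl N l (j / 2 ^ d)))
    with (clen N l * iN / (omega_cyl N l (j / 2 ^ d) / A)) by (field; lra).
  unfold Rdiv. apply Rmult_le_compat_l; [nra|]. apply Rinv_le_contravar.
  - apply Rmult_lt_0_compat; [lra|]. now apply Rinv_0_lt_compat.
  - apply (Rmult_le_reg_r A); [lra|].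
    replace (omega_cyl N l (j / 2 ^ d) * / A * A) with (omega_cyl N l (j / 2 ^ d)) by (field; lra).
    lra.
Qed.

Lemma sumR_omega_regroup l m (h : nat -> R) :
  sumR (2 ^ (l + m)) (fun j => h (j / 2 ^ m)%nat * omega_cyl N (l + m) j) =
  sumR (2 ^ l) (fun i => h i * omega_cyl N l i).
Proof.
  induction m as [|m IH].
  - rewrite Nat.add_0_r. apply sumR_ext. intros. now rewrite Nat.pow_0_r, Nat.div_1_r.
  - rewrite Nat.add_succ_r, Nat.pow_succ_r', sumR_double, <- IH.
    apply sumR_ext. intros i _.
    rewrite !div_pow2_S, <- (omega_cyl_children (l + m) i).
    rewrite double_div2, double_S_div2. ring.
Qed.

Lemma omega_cyl_descendants l m p : (p < 2 ^ l)%nat ->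
  sumR (2 ^ (l + m)) (fun j => (if Nat.eq_dec (j / 2 ^ m) p then 1 else 0) * omega_cyl N (l + m) j)
  = omega_cyl N l p.
Proof.
  intros Hp.
  rewrite (sumR_omega_regroup l m (fun i => if Nat.eq_dec i p then 1 else 0)).
  now apply sumR_indicator.
Qed.

(* l is the generation at which the ancestry of I^K_j leaves that of I^k_{j0}. *)
Lemma ccenter_far_from_branch k j0 K j : (j0 < 2 ^ k)%nat -> (k < K)%nat -> (j < 2 ^ K)%nat ->
  exists l, (l <= k)%nat /\ (j / 2 ^ (K - l) = j0 / 2 ^ (k - l))%nat /\
    7 / 16 * clen N l <= Rabs (ccenter N K j - ccenter N k j0).
Proof.
  intros Hj0 HkK Hj. set (x := ccenter N K j).
  assert (Hanc : forall l, (l <= K)%nat -> in_cyl l (j / 2 ^ (K - l)) x).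
  { intros l Hl. apply in_cyl_ancestor. replace (l + (K - l))%nat with K by lia.
    apply ccenter_in_cyl. }
  destruct (Nat.eq_dec (j / 2 ^ (K - k)) j0) as [Heq|Hne].
  - exists k. rewrite Nat.sub_diag, Nat.pow_0_r, Nat.div_1_r. split; [lia|]. split; [exact Heq|].
    pose proof (in_cyl_child_side k _ x (Hanc (S k) HkK)) as Hside.
    replace (j / 2 ^ (K - S k) / 2)%nat with j0 in Hside.
    2:{ rewrite <- Heq. replace (K - k)%nat with (K - S k + 1)%nat by lia.
        rewrite div_pow2_add. reflexivity. }
    pose proof (clen_pos k).
    destruct (Nat.odd _); [rewrite Rabs_right|rewrite Rabs_left]; lra.
  - assert (Hi : (j / 2 ^ (K - k) < 2 ^ k)%nat)
      by (apply div_pow2_lt; replace (K - k + k)%nat with K by lia; exact Hj).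
    destruct (in_cyl_separation k _ j0 x (ccenter N k j0) Hi Hj0 Hne (Hanc k ltac:(lia))
                (ccenter_in_cyl k j0)) as [l [Hl [Hbranch Hsides]]].
    exists l. split; [lia|]. split.
    + replace (K - l)%nat with (K - k + (k - l))%nat by lia. now rewrite div_pow2_add.
    + pose proof (clen_pos l).
      destruct Hsides as [Hs|Hs]; [rewrite Rabs_left|rewrite Rabs_right]; lra.
Qed.

Lemma poisson_kernel_le_branches a b k j0 K j : a < b -> (j0 < 2 ^ k)%nat ->
  a <= ccenter N k j0 <= b -> (k < K)%nat -> (j < 2 ^ K)%nat ->
  (b - a) / ((b - a) + distI a b (ccenter N K j)) ^ 2 <=
  sumR (S k) (fun l => 4 * INR N ^ l *
    (if Nat.eq_dec (j / 2 ^ (K - l)) (j0 / 2 ^ (k - l)) then 1 else 0)).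
Proof.
  intros Hab Hj0 Hz HkK Hj. pose proof INR_N_ge16.
  assert (HNpow : forall l, 0 < INR N ^ l) by (intros; apply pow_lt; lra).
  destruct (ccenter_far_from_branch k j0 K j Hj0 HkK Hj) as [l [Hl [Hbr Hfar]]].
  pose proof (clen_pos l).
  eapply Rle_trans; [apply (poisson_kernel_le a b _ _ (7 / 16 * clen N l) Hab Hz); [lra|exact Hfar]|].
  replace (/ (7 / 16 * clen N l)) with (16 / 7 * INR N ^ l)
    by (unfold clen; rewrite Rinv_mult, Rinv_inv; field).
  eapply Rle_trans; [|apply (sumR_term_le _ _ l)].
  - cbv beta. rewrite Hbr. destruct Nat.eq_dec; [|contradiction]. specialize (HNpow l). lra.
  - intros l' _. specialize (HNpow l'). destruct Nat.eq_dec; lra.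
  - lia.
Qed.

Lemma poisson_approx_le a b k j0 K : a < b -> (j0 < 2 ^ k)%nat -> a <= ccenter N k j0 <= b ->
  (k < K)%nat -> poisson_approx N a b K <= 8 * INR N ^ k * omega_cyl N k j0.
Proof.
  intros Hab Hj0 Hz HkK. pose proof INR_N_ge16.
  assert (HNpow : forall l, 0 < INR N ^ l) by (intros; apply pow_lt; lra).
  set (branch := fun l j => if Nat.eq_dec (j / 2 ^ (K - l)) (j0 / 2 ^ (k - l)) then 1 else 0).
  apply Rle_trans with (sumR (2 ^ K) (fun j =>
    sumR (S k) (fun l => 4 * INR N ^ l * (branch l j * omega_cyl N K j)))).
  { apply sumR_le. intros j Hj.
    rewrite (sumR_ext _ _ (fun l => omega_cyl N K j * (4 * INR N ^ l * branch l j))) by (intros; ring).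
    rewrite sumR_scal. apply Rmult_le_compat_l; [apply Rlt_le, omega_cyl_pos|].
    now apply poisson_kernel_le_branches. }
  rewrite sumR_swap.
  apply Rle_trans with
    (sumR (S k) (fun l => 4 * omega_cyl N k j0 * (INR N ^ l * (32 / 15) ^ (k - l)))).
  { apply sumR_le. intros l Hl. rewrite sumR_scal.
    assert (Hp : (j0 / 2 ^ (k - l) < 2 ^ l)%nat)
      by (apply div_pow2_lt; replace (k - l + l)%nat with k by lia; exact Hj0).
    pose proof (omega_cyl_descendants l (K - l) _ Hp) as Hdesc.
    replace (l + (K - l))%nat with K in Hdesc by lia.
    pose proof (omega_cyl_ancestor_le l (k - l) j0) as Hanc.
    replace (l + (k - l))%nat with k in Hanc by lia.
    unfold branch. rewrite Hdesc. specialize (HNpow l). nra. }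
  rewrite sumR_scal.
  pose proof (sumR_pow_mul_pow_le (INR N) (32 / 15) k ltac:(lra) ltac:(lra)).
  pose proof (omega_cyl_pos k j0). nra.
Qed.

Lemma poisson_approx_nonneg a b K : a < b -> 0 <= poisson_approx N a b K.
Proof.
  intros Hab. apply sumR_nonneg. intros j _. pose proof (omega_cyl_pos K j).
  assert (0 <= distI a b (ccenter N K j)) by apply Rmax_r.
  apply Rmult_le_pos; [lra|]. apply Rmult_le_pos; [lra|].
  left. apply Rinv_0_lt_compat, pow_lt. lra.
Qed.

Section FirstCentre.

Variables (a b : R) (la lb : bool).
Local Notation inI := (inIb a b la lb).

Definition sigma_atom g j := s_weight N g j * indI a b la lb (ccenter N g j).

Lemma s_weight_eq g j : s_weight N g j = (clen N g / omega_cyl N g j) ^ 2 * omega_cyl N g j.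
Proof.
  pose proof (omega_cyl_pos g j). pose proof (pow_lt (INR N) g ltac:(pose proof INR_N_ge16; lra)).
  unfold s_weight, clen. rewrite Nat.mul_comm, pow_mult. field. lra.
Qed.

Lemma sigma_atom_nonneg g j : 0 <= sigma_atom g j.
Proof.
  unfold sigma_atom. rewrite s_weight_eq. pose proof (omega_cyl_pos g j).
  pose proof (indI_nonneg a b la lb (ccenter N g j)). pose proof (pow2_ge_0 (clen N g / omega_cyl N g j)).
  apply Rmult_le_pos; [|lra]. apply Rmult_le_pos; lra.
Qed.

Lemma sigma_partial_le_limit sig K : Un_cv (sigma_partial N a b la lb) sig ->
  0 <= sigma_partial N a b la lb K <= sig.
Proof.
  intros Hsig. split.
  - apply sumD_nonneg, sigma_atom_nonneg.
  - apply growing_ineq; [|exact Hsig]. intros n. unfold sigma_partial. simpl sumR.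
    pose proof (sumR_nonneg (2 ^ n) (sigma_atom n) (fun j _ => sigma_atom_nonneg n j)).
    unfold sigma_atom in *. lra.
Qed.

Lemma omega_approx_limit_nonneg om : Un_cv (omega_approx N a b la lb) om -> 0 <= om.
Proof.
  intros Hom. apply (Un_cv_ge_eventually _ _ _ 0 Hom). intros K _.
  apply sumR_nonneg. intros j _. pose proof (omega_cyl_pos K j).
  pose proof (indI_nonneg a b la lb (ccenter N K j)). nra.
Qed.

Lemma exists_ccenter_in sig : Un_cv (sigma_partial N a b la lb) sig -> 0 < sig ->
  exists g j, (j < 2 ^ g)%nat /\ inI (ccenter N g j) = true.
Proof.
  intros Hsig Hpos. apply NNPP. intros Hno.
  enough (sig <= 0) by lra.
  apply (Un_cv_le_eventually _ _ _ 0 Hsig). intros K _.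
  apply Req_le, sumR_eq0. intros g _. apply sumR_eq0. intros j Hj.
  unfold indI. destruct (inI (ccenter N g j)) eqn:E; [|ring].
  exfalso. eauto.
Qed.

Definition first_centre k j0 :=
  (j0 < 2 ^ k)%nat /\ inI (ccenter N k j0) = true /\
  forall g j, (g < k)%nat -> (j < 2 ^ g)%nat -> inI (ccenter N g j) = false.

Lemma first_centre_exists :
  (exists g j, (j < 2 ^ g)%nat /\ inI (ccenter N g j) = true) -> exists k j0, first_centre k j0.
Proof.
  intros Hex.
  destruct (dec_inh_nat_subset_has_unique_least_element _ (fun g => classic _) Hex)
    as [k [[[j0 [Hj0 Hin]] Hmin] _]].
  exists k, j0. split; [exact Hj0|]. split; [exact Hin|]. intros g j Hg Hj.
  destruct (inI (ccenter N g j)) eqn:E; [|reflexivity].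
  assert (Hkg : (k <= g)%nat) by (apply Hmin; exists j; split; assumption).
  exfalso. exact (Nat.lt_irrefl k (Nat.le_lt_trans _ _ _ Hkg Hg)).
Qed.

Definition contained g j : bool := inI (cl N g j) && inI (cl N g j + clen N g).

Definition omega_inside g :=
  sumR (2 ^ g) (fun j => (if contained g j then 1 else 0) * omega_cyl N g j).

Lemma omega_inside_le_approx g K : (g <= K)%nat -> omega_inside g <= omega_approx N a b la lb K.
Proof.
  intros HgK. unfold omega_inside, omega_approx.
  rewrite <- (sumR_omega_regroup g (K - g) (fun i => if contained g i then 1 else 0)).
  replace (g + (K - g))%nat with K by lia.
  apply sumR_le. intros j Hj. pose proof (omega_cyl_pos K j).
  pose proof (indI_nonneg a b la lb (ccenter N K j)).
  destruct (contained g (j / 2 ^ (K - g))) eqn:Hc; [|nra].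
  apply andb_prop in Hc as [Hl Hr].
  assert (Hx : in_cyl g (j / 2 ^ (K - g)) (ccenter N K j)).
  { apply in_cyl_ancestor. replace (g + (K - g))%nat with K by lia. apply ccenter_in_cyl. }
  unfold indI. rewrite (inIb_convex _ _ _ _ _ _ _ Hl Hr Hx). lra.
Qed.

Variables k j0 : nat.
Hypothesis Hfirst : first_centre k j0.
Local Notation z := (ccenter N k j0).

(* Otherwise the centre of the last common ancestor of I^g_j and I^k_{j0} would lie
   between their centres, hence in I, and be a centre of earlier generation. *)
Lemma ccenter_in_descends g j : (j < 2 ^ g)%nat -> inI (ccenter N g j) = true ->
  (k <= g)%nat /\ (j / 2 ^ (g - k) = j0)%nat.
Proof.
  destruct Hfirst as [Hj0 [Hz Hmin]]. intros Hj Hin.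
  assert (Hkg : (k <= g)%nat).
  { destruct (Nat.lt_ge_cases g k) as [Hgk|]; [|assumption]. now rewrite Hmin in Hin. }
  split; [exact Hkg|].
  assert (Hi : (j / 2 ^ (g - k) < 2 ^ k)%nat)
    by (apply div_pow2_lt; replace (g - k + k)%nat with g by lia; exact Hj).
  assert (Hx : in_cyl k (j / 2 ^ (g - k)) (ccenter N g j)).
  { apply in_cyl_ancestor. replace (k + (g - k))%nat with g by lia. apply ccenter_in_cyl. }
  destruct (Nat.eq_dec (j / 2 ^ (g - k)) j0) as [|Hne]; [assumption|exfalso].
  destruct (in_cyl_separation k _ j0 _ _ Hi Hj0 Hne Hx (ccenter_in_cyl k j0))
    as [l [Hl [_ Hsides]]].
  assert (Hp : (j0 / 2 ^ (k - l) < 2 ^ l)%nat)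
    by (apply div_pow2_lt; replace (k - l + l)%nat with k by lia; exact Hj0).
  pose proof (clen_pos l).
  assert (Hc : inI (ccenter N l (j0 / 2 ^ (k - l))) = true).
  { destruct Hsides as [Hs|Hs].
    - apply (inIb_convex _ _ _ _ _ _ _ Hin Hz). lra.
    - apply (inIb_convex _ _ _ _ _ _ _ Hz Hin). lra. }
  rewrite Hmin in Hc; auto. discriminate.
Qed.

Lemma sigma_atom_moment_upto_first g : (g <= k)%nat ->
  sumR (2 ^ g) (fun j => sigma_atom g j * (ccenter N g j - z) ^ 2) = 0.
Proof.
  intros Hg. apply sumR_eq0. intros j Hj. unfold sigma_atom, indI.
  destruct (inI (ccenter N g j)) eqn:Hin; [|ring].
  destruct (ccenter_in_descends g j Hj Hin) as [Hkg Hanc].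
  assert (g = k) by lia. subst g.
  rewrite Nat.sub_diag, Nat.pow_0_r, Nat.div_1_r in Hanc. subst j. ring.
Qed.

(* The child of I^g_j facing z lies between z and the centre of I^g_j. *)
Lemma child_facing_first_contained g j : (k < g)%nat -> (j < 2 ^ g)%nat ->
  inI (ccenter N g j) = true ->
  contained (S g) (2 * j) = true \/ contained (S g) (2 * j + 1) = true.
Proof.
  intros Hkg Hj Hin.
  destruct (ccenter_in_descends g j Hj Hin) as [_ Hanc].
  destruct Hfirst as [_ [Hz _]].
  set (p := (j / 2 ^ (g - S k))%nat).
  assert (Hp : (p / 2 = j0)%nat).
  { unfold p. rewrite <- Hanc. replace (g - k)%nat with (g - S k + 1)%nat by lia.
    rewrite div_pow2_add. reflexivity. }
  assert (Hside : forall y, in_cyl g j y ->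
    if Nat.odd p then z + 7 / 16 * clen N k <= y else y <= z - 7 / 16 * clen N k).
  { intros y Hy. rewrite <- Hp. apply in_cyl_child_side. unfold p. apply in_cyl_ancestor.
    replace (S k + (g - S k))%nat with g by lia. exact Hy. }
  pose proof (clen_pos g). pose proof (clen_S_le g). pose proof (clen_pos (S g)).
  pose proof (clen_pos k).
  pose proof (Hside (cl N g j) ltac:(unfold in_cyl; lra)) as Hl.
  pose proof (Hside (cl N g j + clen N g) ltac:(unfold in_cyl; lra)) as Hr.
  assert (Hc : ccenter N g j = cl N g j + clen N g / 2) by reflexivity.
  unfold contained. rewrite !cl_S.
  destruct (Nat.odd p).
  - left. rewrite double_div2, Nat.odd_even, Rplus_0_r.
    apply andb_true_intro. split; apply (inIb_convex _ _ _ _ _ _ _ Hz Hin); lra.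
  - right. rewrite double_S_div2, Nat.odd_odd.
    apply andb_true_intro. split; apply (inIb_convex _ _ _ _ _ _ _ Hin Hz); lra.
Qed.

Lemma omega_cyl_le_inside_children g j : (k < g)%nat -> (j < 2 ^ g)%nat ->
  inI (ccenter N g j) = true ->
  omega_cyl N g j <= 32 / 15 *
    ((if contained (S g) (2 * j) then 1 else 0) * omega_cyl N (S g) (2 * j) +
     (if contained (S g) (2 * j + 1) then 1 else 0) * omega_cyl N (S g) (2 * j + 1)).
Proof.
  intros Hkg Hj Hin.
  pose proof (omega_cyl_parent_le g (2 * j)) as H0. rewrite double_div2 in H0.
  pose proof (omega_cyl_parent_le g (2 * j + 1)) as H1. rewrite double_S_div2 in H1.
  pose proof (omega_cyl_pos (S g) (2 * j)). pose proof (omega_cyl_pos (S g) (2 * j + 1)).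
  destruct (child_facing_first_contained g j Hkg Hj Hin) as [Hc|Hc]; rewrite Hc;
    [destruct (contained (S g) (2 * j + 1))|destruct (contained (S g) (2 * j))]; lra.
Qed.

Local Notation u := (clen N k / omega_cyl N k j0).

Lemma clen_div_omega_in_le g j : (j < 2 ^ g)%nat -> inI (ccenter N g j) = true ->
  clen N g / omega_cyl N g j <= (32 / 15 / INR N) ^ (g - k) * u.
Proof.
  intros Hj Hin. destruct (ccenter_in_descends g j Hj Hin) as [Hkg Hanc].
  pose proof (clen_div_omega_le k (g - k) j) as Hr.
  replace (k + (g - k))%nat with g in Hr by lia. now rewrite Hanc in Hr.
Qed.

Lemma sigma_atom_moment_level_le g : (k < g)%nat ->
  sumR (2 ^ g) (fun j => sigma_atom g j * (ccenter N g j - z) ^ 2)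
  <= (b - a) ^ 2 * (32 / 15) * ((32 / 15 / INR N) ^ (g - k) * u) ^ 2 * omega_inside (S g).
Proof.
  intros Hkg. pose proof Hfirst as [_ [Hz _]]. apply inIb_bounds in Hz.
  set (T := (32 / 15 / INR N) ^ (g - k) * u).
  set (w := fun i => (if contained (S g) i then 1 else 0) * omega_cyl N (S g) i).
  unfold omega_inside. fold w. rewrite Nat.pow_succ_r', sumR_double, <- sumR_scal.
  apply sumR_le. intros j Hj.
  assert (Hw : 0 <= w (2 * j)%nat + w (2 * j + 1)%nat).
  { unfold w. pose proof (omega_cyl_pos (S g) (2 * j)). pose proof (omega_cyl_pos (S g) (2 * j + 1)).
    destruct (contained (S g) (2 * j)), (contained (S g) (2 * j + 1)); lra. }
  pose proof (pow2_ge_0 (b - a)). pose proof (pow2_ge_0 T).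
  unfold sigma_atom, indI. destruct (inI (ccenter N g j)) eqn:Hin.
  2:{ rewrite Rmult_0_r, Rmult_0_l. apply Rmult_le_pos; [nra|lra]. }
  pose proof (omega_cyl_le_inside_children g j Hkg Hj Hin) as Hmass. fold w in Hmass.
  pose proof (clen_div_omega_in_le g j Hj Hin) as Hratio. fold T in Hratio.
  pose proof (clen_pos g). pose proof (omega_cyl_pos g j).
  assert (Hsq : (clen N g / omega_cyl N g j) ^ 2 <= T ^ 2)
    by (apply pow_incr; split; [apply Rlt_le, Rdiv_lt_0_compat|]; lra).
  apply inIb_bounds in Hin.
  assert (Hdist : (ccenter N g j - z) ^ 2 <= (b - a) ^ 2) by nra.
  rewrite s_weight_eq, Rmult_1_r.
  apply Rle_trans with (T ^ 2 * (b - a) ^ 2 * omega_cyl N g j).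
  - rewrite Rmult_comm, (Rmult_comm (T ^ 2)), Rmult_assoc.
    apply Rmult_le_compat; [apply pow2_ge_0|nra|exact Hdist|].
    apply Rmult_le_compat_r; lra.
  - replace ((b - a) ^ 2 * (32 / 15) * T ^ 2 * (w (2 * j)%nat + w (2 * j + 1)%nat))
      with (T ^ 2 * (b - a) ^ 2 * (32 / 15 * (w (2 * j)%nat + w (2 * j + 1)%nat))) by ring.
    apply Rmult_le_compat_l; [nra|exact Hmass].
Qed.

Lemma sigma_second_moment_le om K : Un_cv (omega_approx N a b la lb) om ->
  sumD K (fun g j => sigma_atom g j * (ccenter N g j - z) ^ 2) <= (b - a) ^ 2 * u ^ 2 * om.
Proof.
  intros Hom. pose proof INR_N_ge16. pose proof (omega_approx_limit_nonneg om Hom).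
  set (t := 32 / 15 / INR N).
  assert (Ht : 0 <= t <= 2 / 15).
  { unfold t. split; [apply Rmult_le_pos; [lra|left; apply Rinv_0_lt_compat; lra]|].
    unfold Rdiv. apply Rle_trans with (32 / 15 * / 16); [|lra].
    apply Rmult_le_compat_l; [lra|]. apply Rinv_le_contravar; lra. }
  set (M := (b - a) ^ 2 * (32 / 15) * u ^ 2 * om).
  assert (HM : 0 <= M).
  { unfold M. pose proof (pow2_ge_0 (b - a)). pose proof (pow2_ge_0 u).
    apply Rmult_le_pos; [|lra]. apply Rmult_le_pos; [|lra]. nra. }
  apply Rle_trans with (sumR K (fun g => M * (if Nat.ltb k g then (t ^ 2) ^ (g - k) else 0))).
  - apply sumR_le. intros g _. destruct (Nat.ltb_spec k g) as [Hkg|Hgk].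
    + eapply Rle_trans; [apply (sigma_atom_moment_level_le g Hkg)|]. fold t.
      assert (Hin : omega_inside (S g) <= om)
        by (apply (Un_cv_ge_eventually _ _ _ (S g) Hom); intros; now apply omega_inside_le_approx).
      replace ((t ^ (g - k) * u) ^ 2) with ((t ^ 2) ^ (g - k) * u ^ 2)
        by (rewrite <- !pow_mult, Nat.mul_comm, pow_mult; ring).
      unfold M. pose proof (pow2_ge_0 (b - a)). pose proof (pow2_ge_0 u).
      pose proof (pow_le (t ^ 2) (g - k) ltac:(nra)).
      assert (0 <= (b - a) ^ 2 * (32 / 15) * ((t ^ 2) ^ (g - k) * u ^ 2)).
      { apply Rmult_le_pos; [|nra]. nra. }
      apply Rle_trans with ((b - a) ^ 2 * (32 / 15) * ((t ^ 2) ^ (g - k) * u ^ 2) * om);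
        [apply Rmult_le_compat_l; auto|right; ring].
    + rewrite sigma_atom_moment_upto_first by exact Hgk. lra.
  - rewrite sumR_scal.
    eapply Rle_trans; [apply Rmult_le_compat_l; [exact HM|apply (sumR_geom_tail_le k (t ^ 2) K); nra]|].
    replace M with (32 / 15 * ((b - a) ^ 2 * u ^ 2 * om)) by (unfold M; ring).
    assert (0 <= (b - a) ^ 2 * u ^ 2 * om)
      by (pose proof (pow2_ge_0 (b - a)); pose proof (pow2_ge_0 u); apply Rmult_le_pos; [nra|lra]).
    assert (t ^ 2 <= 4 / 225) by nra.
    nra.
Qed.

Lemma dbl_limit_le sig dbl om :
  Un_cv (sigma_partial N a b la lb) sig -> Un_cv (dbl_partial N a b la lb) dbl ->
  Un_cv (omega_approx N a b la lb) om -> dbl <= 4 * sig * ((b - a) ^ 2 * u ^ 2 * om).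
Proof.
  intros Hsig Hdbl Hom. apply (Un_cv_le_eventually _ _ _ 0 Hdbl). intros K _.
  eapply Rle_trans; [apply (sumD_sq_diff_le K sigma_atom (ccenter N) z), sigma_atom_nonneg|].
  change (sumD K sigma_atom) with (sigma_partial N a b la lb K).
  pose proof (sigma_partial_le_limit sig K Hsig).
  pose proof (sigma_second_moment_le om K Hom).
  pose proof (sumD_nonneg K (fun g j => sigma_atom g j * (ccenter N g j - z) ^ 2)
                (fun g j => Rmult_le_pos _ _ (sigma_atom_nonneg g j) (pow2_ge_0 _))).
  apply Rmult_le_compat; [lra|assumption|apply Rmult_le_compat_l|]; lra.
Qed.

Lemma poisson_limit_le P : a < b -> Un_cv (poisson_approx N a b) P -> 0 <= u * P <= 8.
Proof.
  intros Hab HP. destruct Hfirst as [Hj0 [Hz _]]. apply inIb_bounds in Hz.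
  pose proof (clen_pos k). pose proof (omega_cyl_pos k j0).
  assert (0 < u) by (apply Rdiv_lt_0_compat; lra).
  assert (0 <= P)
    by (apply (Un_cv_ge_eventually _ _ _ 0 HP); intros; now apply poisson_approx_nonneg).
  assert (P <= 8 * INR N ^ k * omega_cyl N k j0)
    by (apply (Un_cv_le_eventually _ _ _ (S k) HP); intros; now apply poisson_approx_le).
  assert (Hu8 : u * (8 * INR N ^ k * omega_cyl N k j0) = 8).
  { replace (u * (8 * INR N ^ k * omega_cyl N k j0)) with (8 * (INR N ^ k * clen N k))
      by (field; lra).
    rewrite pow_mul_clen. ring. }
  split; [nra|]. rewrite <- Hu8. apply Rmult_le_compat_l; lra.
Qed.

End FirstCentre.

End CantorIntervals.

Theorem mainTheorem8 :
  forall N : nat, (16 <= N)%nat ->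
  exists C : R,
  forall (a b : R) (la lb : bool),
    0 <= a -> a < b -> b <= 1 ->
  forall sig dbl om P : R,
    Un_cv (sigma_partial N a b la lb) sig ->
    Un_cv (dbl_partial N a b la lb) dbl ->
    Un_cv (omega_approx N a b la lb) om ->
    Un_cv (poisson_approx N a b) P ->
    0 < sig ->
    sig * (/ 2 * (1 / sig ^ 2) * (dbl / (b - a) ^ 2)) * P ^ 2 <= C * om.
Proof.
  intros N HN. exists 128.
  (* The bound holds for every interval. *)
  intros a b la lb _ Hab _ sig dbl om P Hsig Hdbl Hom HP Hsig_pos.
  destruct (first_centre_exists N a b la lb (exists_ccenter_in N a b la lb sig Hsig Hsig_pos))
    as [k [j0 Hfirst]].
  pose proof (dbl_limit_le N HN a b la lb k j0 Hfirst sig dbl om Hsig Hdbl Hom) as Hdbl_le.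
  pose proof (poisson_limit_le N HN a b la lb k j0 Hfirst P Hab HP) as HuP.
  pose proof (omega_approx_limit_nonneg N HN a b la lb om Hom).
  set (u := clen N k / omega_cyl N k j0) in *.
  assert (Hscale : 0 < sig * (b - a) ^ 2) by (apply Rmult_lt_0_compat; [|apply pow_lt]; lra).
  replace (sig * (/ 2 * (1 / sig ^ 2) * (dbl / (b - a) ^ 2)) * P ^ 2)
    with (dbl / (sig * (b - a) ^ 2) * P ^ 2 / 2) by (field; lra).
  assert (Hratio : dbl / (sig * (b - a) ^ 2) <= 4 * u ^ 2 * om).
  { apply Rmult_le_reg_r with (sig * (b - a) ^ 2); [exact Hscale|].
    replace (dbl / (sig * (b - a) ^ 2) * (sig * (b - a) ^ 2)) with dbl by (field; lra). nra. }
  assert ((u * P) ^ 2 <= 64) by nra.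
  apply Rle_trans with (4 * u ^ 2 * om * P ^ 2 / 2); [|nra].
  apply Rmult_le_compat_r; [lra|]. apply Rmult_le_compat_r; [apply pow2_ge_0|exact Hratio].
Qed.
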